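(* Let $n\ge2$, $\lambda_0\in\mathbb D\setminus\{0\}$ and $y^0\in\widetilde{\mathbb G}_n$. Then there exists an analytic $\psi:\mathbb D\to\widetilde\Gamma_n$ with $\psi(0)=(0,\dots,0)$ and $\psi(\lambda_0)=y^0$ if and only if there exists an analytic $\psi:\mathbb D\to\widetilde{\mathbb G}_n$ with $\psi(0)=(0,\dots,0)$ and $\psi(\lambda_0)=y^0$.
   Context: $\mathbb D$ is the open unit disc. $\widetilde{\mathbb G}_n=\{(y_1,\dots,y_{n-1},q)\in\mathbb C^n: q\in\mathbb D,\ y_j=\beta_j+\bar\beta_{n-j}q$ for some $\beta_j\in\mathbb C$ with $|\beta_j|+|\beta_{n-j}|<\binom{n}{j}$, $j=1,\dots,n-1\}$; $\widetilde\Gamma_n$ is its closure. *)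

From Stdlib Require Import Reals.
From Coquelicot Require Import Coquelicot.
Open Scope R_scope.

(* A point of C^n is encoded as (y, q) with y : nat -> C; only the
   coordinates y 1, ..., y (n-1) are meaningful, q is the last coordinate. *)

Definition inD (z : C) : Prop := Cmod z < 1.

Definition binom (n j : nat) : R := Binomial.C n j.

Definition tG (n : nat) (y : nat -> C) (q : C) : Prop :=
  inD q /\
  exists beta : nat -> C,
    forall j : nat, (1 <= j <= n - 1)%nat ->
      y j = Cplus (beta j) (Cmult (Cconj (beta (n - j)%nat)) q) /\
      Cmod (beta j) + Cmod (beta (n - j)%nat) < binom n j.

Definition tGamma (n : nat) (y : nat -> C) (q : C) : Prop :=
  forall eps : R, 0 < eps ->
    exists (y' : nat -> C) (q' : C), tG n y' q' /\
      (forall j : nat, (1 <= j <= n - 1)%nat -> Cmod (Cminus (y' j) (y j)) < eps) /\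
      Cmod (Cminus q' q) < eps.

Definition holo_on_D (f : C -> C) : Prop :=
  forall z : C, inD z -> ex_derive (K := C_AbsRing) (V := C_NormedModule) f z.

Definition analytic_interp (S : (nat -> C) -> C -> Prop) (n : nat)
    (psiy : C -> nat -> C) (psiq : C -> C)
    (lam0 : C) (y0 : nat -> C) (q0 : C) : Prop :=
  (forall j : nat, (1 <= j <= n - 1)%nat -> holo_on_D (fun z => psiy z j)) /\
  holo_on_D psiq /\
  (forall z : C, inD z -> S (psiy z) (psiq z)) /\
  (forall j : nat, (1 <= j <= n - 1)%nat -> psiy (RtoC 0) j = RtoC 0) /\
  psiq (RtoC 0) = RtoC 0 /\
  (forall j : nat, (1 <= j <= n - 1)%nat -> psiy lam0 j = y0 j) /\
  psiq lam0 = q0.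

(* An analytic disc [psi] in the closure of G~_n with [psi 0 = 0] already lies in G~_n.
   A point [(y, q)] with [|q| < 1] lies in G~_n iff for every [j], with [c = C(n, j)],
     [|y_j - conj(y_(n-j)) q| + |y_(n-j) - conj(y_j) q| < c (1 - |q|^2)],
   while on the closure [|q| <= 1] and [|c q om - y_j| <= |c - y_(n-j) om|] for [|om| = 1].
   Along [psi], both [psi_q] and [(c psi_q om - psi_j) / (c - psi_(n-j) om)] are holomorphic
   maps of the disc into the closed disc vanishing at 0, so by the strict maximum modulus
   principle they take values in the open disc; a suitable choice of [om] turns this into
   the strict inequality above. The maximum principle comes from the mean value property of
   [Re f], obtained by Goursat's bisection argument applied to the Cauchy-Riemann equations
   integrated over polar rectangles. *)

From Stdlib Require Import Reals Lra Lia.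
From Coquelicot Require Import Coquelicot.
Open Scope R_scope.

Lemma Rabs_im_le_Cmod (c : C) : Rabs (snd c) <= Cmod c.
Proof. destruct c as [a b]; apply (Rle_trans _ _ _ (Rmax_r _ _) (Rmax_Cmod (a, b))). Qed.

Lemma Cmod_le_Rabs_add (a b : R) : Cmod (a, b) <= Rabs a + Rabs b.
Proof.
  apply Rsqr_incr_0_var; [|pose proof (Rabs_pos a); pose proof (Rabs_pos b); lra].
  unfold Cmod; simpl; rewrite Rsqr_sqrt by nra.
  pose proof (Rsqr_abs a); pose proof (Rsqr_abs b); unfold Rsqr in *.
  pose proof (Rabs_pos a); pose proof (Rabs_pos b); nra.
Qed.

Lemma Cmod_le_sub (a b : C) : Cmod a <= Cmod b + Cmod (a - b).
Proof. replace a with (b + (a - b))%C at 1 by ring. apply Cmod_triangle. Qed.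

Lemma Cmod_sub_sym (a b : C) : Cmod (a - b) = Cmod (b - a).
Proof. replace (a - b)%C with (- (b - a))%C by ring. apply Cmod_opp. Qed.

Lemma Rle_of_forall_le_add (x a K : R) :
  0 < K -> (forall eps, 0 < eps -> x <= a + K * eps) -> x <= a.
Proof.
  intros HK H. apply le_epsilon. intros eps Heps.
  specialize (H (eps / K) (Rdiv_lt_0_compat _ _ Heps HK)).
  replace (K * (eps / K)) with eps in H by (field; lra). exact H.
Qed.

Notation is_Cderive f z l := (@is_derive C_AbsRing C_NormedModule f z l).
Notation ex_Cderive f z := (@ex_derive C_AbsRing C_NormedModule f z).

(* [holo_on_D] differentiates into [C_NormedModule], whereas Coquelicot's product and chain
   rules are stated for [AbsRing_NormedModule C_AbsRing]; the two differ only by an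
   equivalent uniform structure, and derivatives transfer between them. *)
Lemma is_Cderive_of_AbsRing (f : C -> C) z l :
  is_derive (V := AbsRing_NormedModule C_AbsRing) f z l -> is_Cderive f z l.
Proof. intros [[Hp Hs Hn] H]; repeat split; assumption. Qed.

Lemma AbsRing_of_is_Cderive (f : C -> C) z l :
  is_Cderive f z l -> is_derive (V := AbsRing_NormedModule C_AbsRing) f z l.
Proof. intros [[Hp Hs Hn] H]; repeat split; assumption. Qed.

Definition Ccontinuous (h : C -> C) (z : C) : Prop :=
  forall eps, 0 < eps -> exists del, 0 < del /\
    forall z', Cmod (z' - z) < del -> Cmod (h z' - h z) < eps.

Lemma ex_Cderive_Ccontinuous (f : C -> C) z : ex_Cderive f z -> Ccontinuous f z.
Proof.
  intros [l Hd] eps Heps.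
  destruct (ex_derive_continuous (V := AbsRing_NormedModule C_AbsRing) f z
    (ex_intro _ l (AbsRing_of_is_Cderive f z l Hd)) _
    (locally_ball (T := AbsRing_NormedModule C_AbsRing) (f z) (mkposreal eps Heps)))
    as [d Hball].
  exists d; split; [apply cond_pos|]. exact Hball.
Qed.

Lemma is_Cderive_iff (f : C -> C) z l : is_Cderive f z l <->
  forall eps, 0 < eps -> exists del, 0 < del /\
    forall z', Cmod (z' - z) < del ->
      Cmod (f z' - f z - l * (z' - z)) <= eps * Cmod (z' - z).
Proof.
  split.
  - intros [_ H] eps Heps.
    destruct (locally_norm_le_locally (V := AbsRing_NormedModule C_AbsRing) z _
      (H z (fun P H => H) (mkposreal eps Heps))) as [d Hd].
    exists d; split; [apply cond_pos|]. intros z' Hz'.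
    replace (f z' - f z - l * (z' - z))%C with (f z' + - f z + - ((z' + - z) * l))%C
      by ring.
    exact (Hd z' Hz').
  - intros H. split; [apply is_linear_scal_l|].
    intros x Hx.
    apply (is_filter_lim_locally_unique (V := AbsRing_NormedModule C_AbsRing)) in Hx.
    subst x. intros eps. destruct (H eps (cond_pos eps)) as [d [Hd H']].
    apply (locally_le_locally_norm (V := AbsRing_NormedModule C_AbsRing) z).
    exists (mkposreal d Hd). intros z' Hz'.
    change (Cmod (f z' + - f z + - ((z' + - z) * l)) <= eps * Cmod (z' + - z)).
    replace (f z' + - f z + - ((z' + - z) * l))%C with (f z' - f z - l * (z' - z))%C
      by ring.
    exact (H' z' Hz').
Qed.

Lemma ex_Cderive_const (c z : C) : ex_Cderive (fun _ => c) z.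
Proof. exists zero. apply is_derive_const. Qed.

Lemma ex_Cderive_id (z : C) : ex_Cderive (fun u => u) z.
Proof. exists one. apply is_Cderive_of_AbsRing, (is_derive_id (K := C_AbsRing)). Qed.

Lemma ex_Cderive_minus (f g : C -> C) z :
  ex_Cderive f z -> ex_Cderive g z -> ex_Cderive (fun u => f u - g u)%C z.
Proof. intros [a Ha] [b Hb]. exists (minus a b). exact (is_derive_minus f g z a b Ha Hb). Qed.

Lemma ex_Cderive_mult (f g : C -> C) z :
  ex_Cderive f z -> ex_Cderive g z -> ex_Cderive (fun u => f u * g u)%C z.
Proof.
  intros [a Ha] [b Hb]. eexists. apply is_Cderive_of_AbsRing.
  exact (is_derive_mult f g z a b (AbsRing_of_is_Cderive _ _ _ Ha)
    (AbsRing_of_is_Cderive _ _ _ Hb) Cmult_comm).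
Qed.

Lemma ex_Cderive_comp (f g : C -> C) z :
  ex_Cderive f (g z) -> ex_Cderive g z -> ex_Cderive (fun u => f (g u)) z.
Proof.
  intros [a Ha] [b Hb]. eexists.
  exact (is_derive_comp f g z a b Ha (AbsRing_of_is_Cderive _ _ _ Hb)).
Qed.

Lemma is_Cderive_Cinv (z : C) : z <> 0%C -> is_Cderive Cinv z (- / (z * z))%C.
Proof.
  intro Hz. apply is_Cderive_iff. intros eps Heps.
  assert (Hm : 0 < Cmod z) by (apply Cmod_gt_0; exact Hz).
  exists (Rmin (Cmod z / 2) (eps * Cmod z ^ 3 / 2)). split.
  { apply Rmin_pos; [lra|]. pose proof (pow_lt _ 3 Hm). nra. }
  intros z' Hz'.
  assert (H1 : Cmod (z' - z) < Cmod z / 2) by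
    (eapply Rlt_le_trans; [exact Hz'|apply Rmin_l]).
  assert (H2 : Cmod (z' - z) < eps * Cmod z ^ 3 / 2) by
    (eapply Rlt_le_trans; [exact Hz'|apply Rmin_r]).
  assert (Hz'm : Cmod z / 2 < Cmod z').
  { pose proof (Cmod_le_sub z z'). rewrite Cmod_sub_sym in H. lra. }
  assert (Hz'0 : z' <> 0%C) by (apply Cmod_gt_0; lra).
  replace (/ z' - / z - - / (z * z) * (z' - z))%C
    with ((z' - z) * ((z' - z) / (z' * z * z)))%C by (field; tauto).
  rewrite Cmod_mult, Cmod_div, !Cmod_mult by (repeat apply Cmult_neq_0; assumption).
  rewrite Rmult_comm. apply Rmult_le_compat_r; [apply Cmod_ge_0|].
  apply Rle_div_l; [apply Rmult_lt_0_compat; [apply Rmult_lt_0_compat|]; lra|].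
  assert (Cmod z ^ 3 / 2 <= Cmod z' * Cmod z * Cmod z).
  { replace (Cmod z ^ 3 / 2) with (Cmod z / 2 * Cmod z * Cmod z) by (simpl; field).
    apply Rmult_le_compat_r; [lra|]. apply Rmult_le_compat_r; lra. }
  apply Rlt_le, (Rlt_le_trans _ _ _ H2).
  unfold Rdiv; rewrite Rmult_assoc. apply Rmult_le_compat_l; lra.
Qed.

Lemma ex_Cderive_div (f g : C -> C) z :
  ex_Cderive f z -> ex_Cderive g z -> g z <> 0%C -> ex_Cderive (fun u => f u / g u)%C z.
Proof.
  intros Hf [b Hb] Hz. apply (ex_Cderive_mult f (fun u => / g u)%C); [exact Hf|].
  eexists. exact (is_derive_comp Cinv g z _ b (is_Cderive_Cinv _ Hz)
    (AbsRing_of_is_Cderive _ _ _ Hb)).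
Qed.

Lemma nested_intervals_common_point (a b : nat -> R) :
  (forall k m, a k <= b m) -> exists x, forall k, a k <= x <= b k.
Proof.
  intros Hab.
  destruct (completeness (fun x => exists k, x = a k)) as [x [Hub Hlub]].
  - exists (b O). intros x [k ->]. apply Hab.
  - exists (a O), O. reflexivity.
  - exists x. intros k. split.
    + apply Hub. exists k. reflexivity.
    + apply Hlub. intros y [m ->]. apply Hab.
Qed.

Record rect := Rect { lo1 : R; hi1 : R; lo2 : R; hi2 : R }.

Definition subrect (r s : rect) : Prop :=
  lo1 s <= lo1 r /\ lo1 r <= hi1 r /\ hi1 r <= hi1 s /\
  lo2 s <= lo2 r /\ lo2 r <= hi2 r /\ hi2 r <= hi2 s.

Definition rect_size (r : rect) : R := (hi1 r - lo1 r) + (hi2 r - lo2 r).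

Lemma subrect_trans r s t : subrect r s -> subrect s t -> subrect r t.
Proof. unfold subrect; lra. Qed.

Section Goursat.
Variable Q : rect.
Variable Phi : rect -> R.
Hypothesis HQ : subrect Q Q.
Hypothesis Phi_split1 : forall a1 m b1 a2 b2, subrect (Rect a1 b1 a2 b2) Q -> a1 <= m <= b1 ->
  Phi (Rect a1 b1 a2 b2) = Phi (Rect a1 m a2 b2) + Phi (Rect m b1 a2 b2).
Hypothesis Phi_split2 : forall a1 b1 a2 m b2, subrect (Rect a1 b1 a2 b2) Q -> a2 <= m <= b2 ->
  Phi (Rect a1 b1 a2 b2) = Phi (Rect a1 b1 a2 m) + Phi (Rect a1 b1 m b2).
Hypothesis Phi_local : forall x y, lo1 Q <= x <= hi1 Q -> lo2 Q <= y <= hi2 Q ->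
  forall eps, 0 < eps -> exists del, 0 < del /\
  forall r, subrect r Q -> lo1 r <= x <= hi1 r -> lo2 r <= y <= hi2 r ->
    rect_size r < del -> Rabs (Phi r) <= eps * rect_size r ^ 2.

Definition quarter_select (r : rect) : rect :=
  let m1 := (lo1 r + hi1 r) / 2 in
  let m2 := (lo2 r + hi2 r) / 2 in
  let q1 := Rect (lo1 r) m1 (lo2 r) m2 in
  let q2 := Rect m1 (hi1 r) (lo2 r) m2 in
  let q3 := Rect (lo1 r) m1 m2 (hi2 r) in
  let q4 := Rect m1 (hi1 r) m2 (hi2 r) in
  if Rle_dec (Rabs (Phi r) / 4) (Rabs (Phi q1)) then q1 else
  if Rle_dec (Rabs (Phi r) / 4) (Rabs (Phi q2)) then q2 else
  if Rle_dec (Rabs (Phi r) / 4) (Rabs (Phi q3)) then q3 else q4.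

Lemma quarter_select_spec r : subrect r Q ->
  subrect (quarter_select r) r /\ rect_size (quarter_select r) = rect_size r / 2 /\
  Rabs (Phi r) / 4 <= Rabs (Phi (quarter_select r)).
Proof.
  destruct r as [a1 b1 a2 b2]. intros Hr.
  unfold quarter_select, subrect, rect_size; simpl.
  remember ((a1 + b1) / 2) as m1 eqn:Hm1. remember ((a2 + b2) / 2) as m2 eqn:Hm2.
  assert (Hsum : Phi (Rect a1 b1 a2 b2) = Phi (Rect a1 m1 a2 m2) + Phi (Rect m1 b1 a2 m2)
                   + Phi (Rect a1 m1 m2 b2) + Phi (Rect m1 b1 m2 b2)).
  { rewrite (Phi_split1 a1 m1 b1 a2 b2), (Phi_split2 a1 m1 a2 m2 b2),
      (Phi_split2 m1 b1 a2 m2 b2) by (unfold subrect in *; simpl in *; lra).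
    ring. }
  unfold subrect in Hr; simpl in Hr.
  destruct (Rle_dec _ _) as [H1|H1]; [simpl; repeat split; lra|].
  destruct (Rle_dec _ _) as [H2|H2]; [simpl; repeat split; lra|].
  destruct (Rle_dec _ _) as [H3|H3]; [simpl; repeat split; lra|].
  simpl. repeat split; try lra.
  pose proof (Rabs_triang (Phi (Rect a1 m1 a2 m2) + Phi (Rect m1 b1 a2 m2)
                            + Phi (Rect a1 m1 m2 b2)) (Phi (Rect m1 b1 m2 b2))).
  pose proof (Rabs_triang (Phi (Rect a1 m1 a2 m2) + Phi (Rect m1 b1 a2 m2))
                          (Phi (Rect a1 m1 m2 b2))).
  pose proof (Rabs_triang (Phi (Rect a1 m1 a2 m2)) (Phi (Rect m1 b1 a2 m2))).
  rewrite Hsum in *. lra.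
Qed.

Fixpoint bisect (k : nat) : rect :=
  match k with O => Q | S k => quarter_select (bisect k) end.

Lemma bisect_spec k : subrect (bisect k) Q /\
  rect_size (bisect k) = rect_size Q * (/ 2) ^ k /\
  Rabs (Phi Q) * (/ 4) ^ k <= Rabs (Phi (bisect k)).
Proof.
  induction k as [|k (Hk & Hs & HPhi)]; simpl; [split; [exact HQ|split; lra]|].
  destruct (quarter_select_spec _ Hk) as (Hsub & Hs' & HPhi').
  split; [|split].
  - exact (subrect_trans _ _ _ Hsub Hk).
  - rewrite Hs', Hs. field.
  - lra.
Qed.

Lemma bisect_decreasing k m : (k <= m)%nat -> subrect (bisect m) (bisect k).
Proof.
  induction 1 as [|m _ IH].
  - destruct (bisect_spec k) as [Hk _]. unfold subrect in *; lra.
  - simpl. destruct (bisect_spec m) as [Hm _].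
    exact (subrect_trans _ _ _ (proj1 (quarter_select_spec _ Hm)) IH).
Qed.

Lemma bisect_common_point : exists x y, forall k,
  lo1 (bisect k) <= x <= hi1 (bisect k) /\ lo2 (bisect k) <= y <= hi2 (bisect k).
Proof.
  assert (Hle : forall k m, subrect (bisect k) (bisect m) \/ subrect (bisect m) (bisect k)).
  { intros k m. destruct (Nat.le_ge_cases k m);
      [right|left]; apply bisect_decreasing; assumption. }
  destruct (nested_intervals_common_point (fun k => lo1 (bisect k)) (fun k => hi1 (bisect k)))
    as [x Hx]; [intros k m; destruct (Hle k m); unfold subrect in *; lra|].
  destruct (nested_intervals_common_point (fun k => lo2 (bisect k)) (fun k => hi2 (bisect k)))
    as [y Hy]; [intros k m; destruct (Hle k m); unfold subrect in *; lra|].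
  exists x, y. auto.
Qed.

(* Each quartering keeps at least a quarter of [|Phi|], so [|Phi (bisect N)| >= |Phi Q| / 4^N],
   while near the common point [Phi] is [o(size^2) = o(4^-N)]. *)
Theorem goursat_bisection : Phi Q = 0.
Proof.
  destruct (Req_dec (Phi Q) 0) as [|Hne]; [assumption|exfalso].
  pose proof (Rabs_pos_lt _ Hne) as Hc.
  set (s := rect_size Q).
  assert (Hs : 0 <= s) by (unfold s, rect_size, subrect in *; lra).
  destruct bisect_common_point as (x & y & Hxy).
  destruct (Hxy O) as [Hx Hy].
  destruct (Phi_local x y Hx Hy (Rabs (Phi Q) / (s ^ 2 + 1)))
    as (del & Hdel & Hloc); [apply Rdiv_lt_0_compat; nra|].
  destruct (pow_lt_1_zero (/ 2) ltac:(rewrite Rabs_pos_eq; lra) (del / (s + 1)))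
    as [N HN]; [apply Rdiv_lt_0_compat; lra|].
  specialize (HN N (Nat.le_refl N)). rewrite Rabs_pos_eq in HN by (apply pow_le; lra).
  destruct (bisect_spec N) as (HsubN & HsN & HPhiN). destruct (Hxy N) as [HxN HyN].
  assert (Hh : 0 < (/ 2) ^ N) by (apply pow_lt; lra).
  assert (Hsmall : rect_size (bisect N) < del).
  { rewrite HsN. apply (Rmult_lt_compat_r (s + 1)) in HN; [|lra].
    replace (del / (s + 1) * (s + 1)) with del in HN by (field; lra). fold s. nra. }
  specialize (Hloc _ HsubN HxN HyN Hsmall).
  rewrite HsN in Hloc. fold s in Hloc.
  replace ((/ 4) ^ N) with ((/ 2) ^ N * (/ 2) ^ N) in HPhiN
    by (rewrite <- Rpow_mult_distr; f_equal; field).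
  replace ((s * (/ 2) ^ N) ^ 2) with (s ^ 2 * ((/ 2) ^ N * (/ 2) ^ N)) in Hloc by ring.
  assert (Hq : Rabs (Phi Q) / (s ^ 2 + 1) * s ^ 2 < Rabs (Phi Q)).
  { apply (Rmult_lt_reg_r (s ^ 2 + 1)); [nra|].
    replace (Rabs (Phi Q) / (s ^ 2 + 1) * s ^ 2 * (s ^ 2 + 1)) with (Rabs (Phi Q) * s ^ 2)
      by (field; nra). nra. }
  assert (Hhh : 0 < (/ 2) ^ N * (/ 2) ^ N) by nra.
  nra.
Qed.

End Goursat.

Lemma Rabs_sin_sub_le x y : Rabs (sin x - sin y) <= Rabs (x - y).
Proof.
  destruct (MVT_abs sin cos y x) as [c [-> _]]; [intros; apply derivable_pt_lim_sin|].
  rewrite <- (Rmult_1_l (Rabs (x - y))) at 2.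
  apply Rmult_le_compat_r; [apply Rabs_pos|]. apply Rabs_le, COS_bound.
Qed.

Lemma Rabs_cos_sub_le x y : Rabs (cos x - cos y) <= Rabs (x - y).
Proof.
  destruct (MVT_abs cos (fun t => - sin t) y x) as [c [-> _]];
    [intros; apply derivable_pt_lim_cos|].
  rewrite <- (Rmult_1_l (Rabs (x - y))) at 2.
  apply Rmult_le_compat_r; [apply Rabs_pos|].
  rewrite Rabs_Ropp. apply Rabs_le, SIN_bound.
Qed.

Definition polar (w : C) (r t : R) : C := (fst w + r * cos t, snd w + r * sin t).

Lemma Cmod_polar_sub_center w r t : Cmod (polar w r t - w) = Rabs r.
Proof.
  unfold polar, Cmod. destruct w as [w1 w2]; simpl.
  replace (_ * (_ * 1) + _ * (_ * 1)) with ((r * r) * (sin t ^ 2 + cos t ^ 2)) by ring.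
  replace (sin t ^ 2 + cos t ^ 2) with 1 by (rewrite <- (sin2_cos2 t); unfold Rsqr; ring).
  rewrite Rmult_1_r. apply sqrt_Rsqr_abs.
Qed.

Lemma Cmod_polar_sub_le w r t r' t' :
  Cmod (polar w r t - polar w r' t') <= 2 * Rabs (r - r') + 2 * Rabs r' * Rabs (t - t').
Proof.
  destruct w as [w1 w2].
  replace (polar (w1, w2) r t - polar (w1, w2) r' t')%C
    with (((r - r') * cos t + r' * (cos t - cos t')),
          ((r - r') * sin t + r' * (sin t - sin t')))
    by (unfold polar, Cminus, Cplus, Copp; simpl; f_equal; ring).
  eapply Rle_trans; [apply Cmod_le_Rabs_add|].
  pose proof (Rabs_triang ((r - r') * cos t) (r' * (cos t - cos t'))).
  pose proof (Rabs_triang ((r - r') * sin t) (r' * (sin t - sin t'))).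
  rewrite !Rabs_mult in *.
  pose proof (Rabs_cos_sub_le t t'); pose proof (Rabs_sin_sub_le t t').
  assert (Rabs (cos t) <= 1) by apply Rabs_le, COS_bound.
  assert (Rabs (sin t) <= 1) by apply Rabs_le, SIN_bound.
  pose proof (Rabs_pos (r - r')); pose proof (Rabs_pos r').
  pose proof (Rabs_pos (cos t)); pose proof (Rabs_pos (sin t)).
  pose proof (Rabs_pos (cos t - cos t')); pose proof (Rabs_pos (sin t - sin t')).
  nra.
Qed.

Lemma Cmod_polar_sub_le_size w r s t x y :
  lo1 r <= s <= hi1 r -> lo2 r <= t <= hi2 r -> lo1 r <= x <= hi1 r -> lo2 r <= y <= hi2 r ->
  Cmod (polar w s t - polar w x y) <= (2 + 2 * Rabs x) * rect_size r.
Proof.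
  intros Hs Ht Hx Hy. eapply Rle_trans; [apply Cmod_polar_sub_le|].
  assert (Rabs (s - x) <= hi1 r - lo1 r) by (apply Rabs_le; lra).
  assert (Rabs (t - y) <= hi2 r - lo2 r) by (apply Rabs_le; lra).
  pose proof (Rabs_pos x). pose proof (Rabs_pos (t - y)).
  unfold rect_size. nra.
Qed.

Lemma continuity_pt_re_im_comp (h : C -> C) (gam : R -> C) t0 K :
  0 <= K -> (forall t, Cmod (gam t - gam t0) <= K * Rabs (t - t0)) ->
  Ccontinuous h (gam t0) ->
  continuity_pt (fun t => fst (h (gam t))) t0 /\
  continuity_pt (fun t => snd (h (gam t))) t0.
Proof.
  intros HK Hgam Hh.
  assert (H : forall eps, 0 < eps -> exists del, 0 < del /\
    forall t, Rabs (t - t0) < del -> Cmod (h (gam t) - h (gam t0)) < eps).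
  { intros eps Heps. destruct (Hh eps Heps) as [d [Hd Hd']].
    exists (d / (K + 1)). split; [apply Rdiv_lt_0_compat; lra|].
    intros t Ht. apply Hd'. eapply Rle_lt_trans; [apply Hgam|].
    apply (Rmult_lt_compat_r (K + 1)) in Ht; [|lra].
    replace (d / (K + 1) * (K + 1)) with d in Ht by (field; lra).
    pose proof (Rabs_pos (t - t0)). nra. }
  split; intros eps Heps; destruct (H eps Heps) as [d [Hd Hd']];
    exists d; split; auto; intros t [_ Ht]; specialize (Hd' t Ht); simpl; unfold R_dist.
  - replace (fst (h (gam t)) - fst (h (gam t0))) with (fst (h (gam t) - h (gam t0))%C)
      by (simpl; ring).
    eapply Rle_lt_trans; [apply re_le_Cmod|exact Hd'].
  - replace (snd (h (gam t)) - snd (h (gam t0))) with (snd (h (gam t) - h (gam t0))%C)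
      by (simpl; ring).
    eapply Rle_lt_trans; [apply Rabs_im_le_Cmod|exact Hd'].
Qed.

Section PolarDefect.
Variables (w : C) (R0 : R).

Definition Ccontinuous_on_disc (h : C -> C) : Prop :=
  forall z, Cmod (z - w) < R0 -> Ccontinuous h z.

Definition polar_re (h : C -> C) (r t : R) : R := fst (h (polar w r t)).
Definition polar_im (h : C -> C) (r t : R) : R := snd (h (polar w r t)).

Definition polar_rect (r : rect) : Prop :=
  0 < lo1 r /\ lo1 r <= hi1 r /\ hi1 r < R0 /\ lo2 r <= hi2 r.

Lemma polar_rect_subrect r s : polar_rect s -> subrect r s -> polar_rect r.
Proof. unfold polar_rect, subrect; lra. Qed.

(* A [rect] is read here as radii in [[lo1, hi1]] and angles in [[lo2, hi2]]. In polar
   coordinates the Cauchy-Riemann equations read [r dU/dr = dV/dt]; the defect is their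
   integral over such a rectangle. *)
Definition polar_defect (h : C -> C) (r : rect) : R :=
  RInt (fun t => polar_re h (hi1 r) t - polar_re h (lo1 r) t) (lo2 r) (hi2 r) -
  RInt (fun s => (polar_im h s (hi2 r) - polar_im h s (lo2 r)) / s) (lo1 r) (hi1 r).

Section ContinuousIntegrand.
Variable h : C -> C.
Hypothesis Hh : Ccontinuous_on_disc h.

Lemma continuity_pt_polar_re r t : Rabs r < R0 -> continuity_pt (polar_re h r) t.
Proof.
  intro Hr. apply (continuity_pt_re_im_comp h (polar w r) t (2 * Rabs r)).
  - pose proof (Rabs_pos r); lra.
  - intro t'. eapply Rle_trans; [apply Cmod_polar_sub_le|].
    rewrite Rminus_diag, Rabs_R0. lra.
  - apply Hh. rewrite Cmod_polar_sub_center. exact Hr.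
Qed.

Lemma continuity_pt_polar_im s t : Rabs s < R0 -> continuity_pt (fun s => polar_im h s t) s.
Proof.
  intro Hs. apply (continuity_pt_re_im_comp h (fun s => polar w s t) s 2).
  - lra.
  - intro s'. eapply Rle_trans; [apply Cmod_polar_sub_le|].
    rewrite Rminus_diag, Rabs_R0. lra.
  - apply Hh. rewrite Cmod_polar_sub_center. exact Hs.
Qed.

Lemma ex_RInt_polar_re r a b : Rabs r < R0 -> ex_RInt (polar_re h r) a b.
Proof.
  intros Hr. apply (ex_RInt_continuous (V := R_CompleteNormedModule)). intros t _.
  apply continuity_pt_filterlim, continuity_pt_polar_re, Hr.
Qed.

Lemma ex_RInt_polar_re_sub r1 r2 a b : Rabs r1 < R0 -> Rabs r2 < R0 ->
  ex_RInt (fun t => polar_re h r2 t - polar_re h r1 t) a b.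
Proof. intros. apply (ex_RInt_minus (V := R_NormedModule)); apply ex_RInt_polar_re; assumption. Qed.

Lemma ex_RInt_polar_im_sub_div t1 t2 a b : 0 < a < R0 -> 0 < b < R0 ->
  ex_RInt (fun s => (polar_im h s t2 - polar_im h s t1) / s) a b.
Proof.
  intros Ha Hb. apply (ex_RInt_continuous (V := R_CompleteNormedModule)). intros s Hs.
  assert (0 < s < R0).
  { destruct Hs as [Hs1 Hs2]. split.
    - eapply Rlt_le_trans; [|exact Hs1]. apply Rmin_case; lra.
    - eapply Rle_lt_trans; [exact Hs2|]. apply Rmax_case; lra. }
  apply continuity_pt_filterlim, continuity_pt_div; [| |lra].
  - apply continuity_pt_minus; apply continuity_pt_polar_im; rewrite Rabs_pos_eq; lra.
  - apply continuity_pt_id.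
Qed.

Lemma polar_defect_split1 a1 m b1 a2 b2 : polar_rect (Rect a1 b1 a2 b2) -> a1 <= m <= b1 ->
  polar_defect h (Rect a1 b1 a2 b2) =
  polar_defect h (Rect a1 m a2 b2) + polar_defect h (Rect m b1 a2 b2).
Proof.
  unfold polar_rect, polar_defect; simpl. intros Hr Hm.
  assert (Ha : forall x, a1 <= x <= b1 -> Rabs x < R0) by
    (intros x Hx; rewrite Rabs_pos_eq; lra).
  rewrite (RInt_ext (V := R_CompleteNormedModule) (fun t => polar_re h b1 t - polar_re h a1 t)
    (fun t => (polar_re h m t - polar_re h a1 t) + (polar_re h b1 t - polar_re h m t)))
    by (intros; simpl; ring).
  rewrite (RInt_plus (V := R_CompleteNormedModule))
    by (apply ex_RInt_polar_re_sub; apply Ha; lra).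
  rewrite <- (RInt_Chasles (V := R_CompleteNormedModule) _ a1 m b1)
    by (apply ex_RInt_polar_im_sub_div; lra).
  unfold plus; simpl. ring.
Qed.

Lemma polar_defect_split2 a1 b1 a2 m b2 : polar_rect (Rect a1 b1 a2 b2) -> a2 <= m <= b2 ->
  polar_defect h (Rect a1 b1 a2 b2) =
  polar_defect h (Rect a1 b1 a2 m) + polar_defect h (Rect a1 b1 m b2).
Proof.
  unfold polar_rect, polar_defect; simpl. intros Hr Hm.
  rewrite (RInt_ext (V := R_CompleteNormedModule) (fun s => (polar_im h s b2 - polar_im h s a2) / s)
    (fun s => (polar_im h s m - polar_im h s a2) / s + (polar_im h s b2 - polar_im h s m) / s))
    by (intros s Hs; rewrite Rmin_left in Hs by lra; simpl; field; lra).
  rewrite (RInt_plus (V := R_CompleteNormedModule))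
    by (apply ex_RInt_polar_im_sub_div; lra).
  rewrite <- (RInt_Chasles (V := R_CompleteNormedModule) _ a2 m b2)
    by (apply ex_RInt_polar_re_sub; rewrite Rabs_pos_eq; lra).
  unfold plus; simpl. ring.
Qed.

Lemma polar_defect_bound r M : polar_rect r ->
  (forall s t, lo1 r <= s <= hi1 r -> lo2 r <= t <= hi2 r -> Cmod (h (polar w s t)) <= M) ->
  Rabs (polar_defect h r) <= 2 * M * (1 + / lo1 r) * rect_size r.
Proof.
  destruct r as [a1 b1 a2 b2]; unfold polar_rect, polar_defect, rect_size; simpl.
  intros Hr HM.
  assert (HM0 : 0 <= M) by
    (eapply Rle_trans; [apply Cmod_ge_0|apply (HM a1 a2); lra]).
  assert (Hre : forall s t, a1 <= s <= b1 -> a2 <= t <= b2 -> Rabs (polar_re h s t) <= M).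
  { intros s t Hs Ht. eapply Rle_trans; [apply re_le_Cmod|]. apply HM; assumption. }
  assert (Him : forall s t, a1 <= s <= b1 -> a2 <= t <= b2 -> Rabs (polar_im h s t) <= M).
  { intros s t Hs Ht. eapply Rle_trans; [apply Rabs_im_le_Cmod|]. apply HM; assumption. }
  assert (Iu : Rabs (RInt (fun t => polar_re h b1 t - polar_re h a1 t) a2 b2)
               <= (b2 - a2) * (2 * M)).
  { apply abs_RInt_le_const; [lra|apply ex_RInt_polar_re_sub; rewrite Rabs_pos_eq; lra|].
    intros t Ht. eapply Rle_trans; [apply Rabs_triang|]. rewrite Rabs_Ropp.
    pose proof (Hre b1 t ltac:(lra) Ht). pose proof (Hre a1 t ltac:(lra) Ht). lra. }
  assert (Iv : Rabs (RInt (fun s => (polar_im h s b2 - polar_im h s a2) / s) a1 b1)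
               <= (b1 - a1) * (2 * M / a1)).
  { apply abs_RInt_le_const; [lra|apply ex_RInt_polar_im_sub_div; lra|].
    intros s Hs. unfold Rdiv. rewrite Rabs_mult, Rabs_inv, (Rabs_pos_eq s) by lra.
    apply Rmult_le_compat.
    - apply Rabs_pos.
    - apply Rlt_le, Rinv_0_lt_compat; lra.
    - eapply Rle_trans; [apply Rabs_triang|]. rewrite Rabs_Ropp.
      pose proof (Him s b2 Hs ltac:(lra)). pose proof (Him s a2 Hs ltac:(lra)). lra.
    - apply Rinv_le_contravar; lra. }
  assert (0 <= M * / a1) by (apply Rmult_le_pos; [|apply Rlt_le, Rinv_0_lt_compat]; lra).
  eapply Rle_trans; [apply Rabs_triang|]. rewrite Rabs_Ropp. unfold Rdiv in Iv. nra.
Qed.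
End ContinuousIntegrand.

Lemma polar_defect_ext h1 h2 r : (forall z, h1 z = h2 z) ->
  polar_defect h1 r = polar_defect h2 r.
Proof.
  intros H. unfold polar_defect, polar_re, polar_im.
  f_equal; apply RInt_ext; intros; rewrite !H; reflexivity.
Qed.

Lemma polar_defect_sub h1 h2 r :
  Ccontinuous_on_disc h1 -> Ccontinuous_on_disc h2 -> polar_rect r ->
  polar_defect (fun z => h1 z - h2 z)%C r = polar_defect h1 r - polar_defect h2 r.
Proof.
  destruct r as [a1 b1 a2 b2]; unfold polar_rect, polar_defect; simpl.
  intros H1 H2 Hr.
  set (h := fun z => (h1 z - h2 z)%C).
  rewrite (RInt_ext (V := R_CompleteNormedModule)
    (fun t => polar_re h b1 t - polar_re h a1 t)
    (fun t => (polar_re h1 b1 t - polar_re h1 a1 t) - (polar_re h2 b1 t - polar_re h2 a1 t)))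
    by (intros; unfold polar_re, h; simpl; ring).
  rewrite (RInt_ext (V := R_CompleteNormedModule)
    (fun s => (polar_im h s b2 - polar_im h s a2) / s)
    (fun s => (polar_im h1 s b2 - polar_im h1 s a2) / s
              - (polar_im h2 s b2 - polar_im h2 s a2) / s))
    by (intros s Hs; rewrite Rmin_left in Hs by lra; unfold polar_im, h; simpl; field; lra).
  assert (Hre : forall g, Ccontinuous_on_disc g ->
    ex_RInt (fun t => polar_re g b1 t - polar_re g a1 t) a2 b2)
    by (intros; apply ex_RInt_polar_re_sub; auto; rewrite Rabs_pos_eq; lra).
  assert (Him : forall g, Ccontinuous_on_disc g ->
    ex_RInt (fun s => (polar_im g s b2 - polar_im g s a2) / s) a1 b1)
    by (intros; apply ex_RInt_polar_im_sub_div; auto; lra).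
  rewrite (RInt_minus (V := R_CompleteNormedModule) _ _ a2 b2),
    (RInt_minus (V := R_CompleteNormedModule) _ _ a1 b1) by auto.
  unfold minus, plus, opp; simpl. ring.
Qed.

Lemma polar_defect_affine (l A : C) r : 0 < lo1 r -> lo1 r <= hi1 r ->
  polar_defect (fun z => l * z - A)%C r = 0.
Proof.
  destruct r as [a1 b1 a2 b2]; unfold polar_defect; simpl. intros Ha1 Hab.
  destruct l as [l1 l2].
  set (K := l1 * (sin b2 - sin a2) + l2 * (cos b2 - cos a2)).
  set (F := fun t => (b1 - a1) * (l1 * sin t + l2 * cos t)).
  assert (HU : is_RInt (fun t => polar_re (fun z => (l1, l2) * z - A)%C b1 t
                                 - polar_re (fun z => (l1, l2) * z - A)%C a1 t)
                       a2 b2 ((b1 - a1) * K)).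
  { replace ((b1 - a1) * K) with (minus (F b2) (F a2))
      by (unfold minus, plus, opp, F, K; simpl; ring).
    apply (is_RInt_derive (V := R_CompleteNormedModule)).
    - intros t _. unfold F, polar_re, polar. auto_derive; [auto|]. simpl; ring.
    - intros t _. apply (ex_derive_continuous (V := R_NormedModule)).
      unfold polar_re, polar; simpl. auto_derive. auto. }
  rewrite (is_RInt_unique _ _ _ _ HU).
  rewrite (RInt_ext (V := R_CompleteNormedModule) _ (fun _ => K)).
  - rewrite RInt_const. unfold scal; simpl; unfold mult; simpl. ring.
  - intros s Hs. rewrite Rmin_left in Hs by lra.
    unfold polar_im, polar, K; simpl. field. lra.
Qed.
End PolarDefect.

Section MeanValue.
Variables (g : C -> C) (w : C) (R0 : R).
Hypothesis Hg : forall z, Cmod (z - w) < R0 -> ex_Cderive g z.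

Lemma Ccontinuous_on_disc_holo : Ccontinuous_on_disc w R0 g.
Proof. intros z Hz. apply ex_Cderive_Ccontinuous, Hg, Hz. Qed.

Lemma polar_defect_linear_remainder zs l r : polar_rect R0 r ->
  polar_defect w g r = polar_defect w (fun z => g z - g zs - l * (z - zs))%C r.
Proof.
  intros Hr. pose proof Hr as Hr'. unfold polar_rect in Hr'.
  rewrite <- (Rminus_0_r (polar_defect w g r)).
  rewrite <- (polar_defect_affine w l (l * zs - g zs) r) by lra.
  rewrite <- (polar_defect_sub w R0); [|exact Ccontinuous_on_disc_holo| |exact Hr].
  - apply polar_defect_ext. intros z. ring.
  - intros z _. apply ex_Cderive_Ccontinuous, ex_Cderive_minus; [|apply ex_Cderive_const].
    apply ex_Cderive_mult; [apply ex_Cderive_const|apply ex_Cderive_id].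
Qed.

Lemma Ccontinuous_on_disc_remainder zs l :
  Ccontinuous_on_disc w R0 (fun z => g z - g zs - l * (z - zs))%C.
Proof.
  intros z Hz. apply ex_Cderive_Ccontinuous.
  apply ex_Cderive_minus; [apply ex_Cderive_minus; [apply Hg, Hz|apply ex_Cderive_const]|].
  apply ex_Cderive_mult; [apply ex_Cderive_const|].
  apply ex_Cderive_minus; [apply ex_Cderive_id|apply ex_Cderive_const].
Qed.

(* Subtracting the linearization at [zs] changes nothing, since affine maps have zero
   defect; the remainder is [o(rect_size r)] on [r], so its defect is [o(rect_size r ^ 2)]. *)
Lemma polar_defect_local Q : polar_rect R0 Q ->
  forall x y, lo1 Q <= x <= hi1 Q -> lo2 Q <= y <= hi2 Q ->
  forall eps, 0 < eps -> exists del, 0 < del /\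
  forall r, subrect r Q -> lo1 r <= x <= hi1 r -> lo2 r <= y <= hi2 r ->
    rect_size r < del -> Rabs (polar_defect w g r) <= eps * rect_size r ^ 2.
Proof.
  intros HQ x y Hx Hy eps Heps. pose proof HQ as HQ'. unfold polar_rect in HQ'.
  set (zs := polar w x y).
  destruct (Hg zs) as [l Hl]; [unfold zs; rewrite Cmod_polar_sub_center, Rabs_pos_eq; lra|].
  set (Kp := 2 + 2 * hi1 Q).
  set (C1 := 1 + / lo1 Q).
  assert (HC1 : 0 < C1) by (unfold C1; pose proof (Rinv_0_lt_compat (lo1 Q)); lra).
  set (e' := eps / (2 * Kp * C1)).
  assert (He' : 0 < e') by (unfold e', Kp; apply Rdiv_lt_0_compat; nra).
  destruct (proj1 (is_Cderive_iff g zs l) Hl e' He') as (d & Hd & Htaylor).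
  exists (d / Kp). split; [unfold Kp; apply Rdiv_lt_0_compat; lra|].
  intros r Hr Hxr Hyr Hsize. pose proof Hr as Hr'. unfold subrect in Hr'.
  assert (Hrect : polar_rect R0 r) by exact (polar_rect_subrect R0 r Q HQ Hr).
  set (s := rect_size r) in *.
  assert (Hs0 : 0 <= s) by (unfold s, rect_size; lra).
  assert (Hdist : forall s' t, lo1 r <= s' <= hi1 r -> lo2 r <= t <= hi2 r ->
                  Cmod (polar w s' t - zs) <= Kp * s).
  { intros s' t Hs' Ht. eapply Rle_trans; [apply Cmod_polar_sub_le_size; eassumption|].
    apply Rmult_le_compat_r; [exact Hs0|]. rewrite Rabs_pos_eq; unfold Kp; lra. }
  rewrite (polar_defect_linear_remainder zs l r Hrect).
  eapply Rle_trans;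
    [apply (polar_defect_bound w R0 _ (Ccontinuous_on_disc_remainder zs l) r (e' * (Kp * s)) Hrect)|].
  - intros s' t Hs' Ht. pose proof (Hdist s' t Hs' Ht).
    eapply Rle_trans; [apply Htaylor|apply Rmult_le_compat_l; lra].
    apply (Rle_lt_trans _ (Kp * s)); [assumption|].
    apply (Rmult_lt_compat_l Kp) in Hsize; [|unfold Kp; lra].
    replace (Kp * (d / Kp)) with d in Hsize by (field; unfold Kp; lra). exact Hsize.
  - assert (Hinv : / lo1 r <= / lo1 Q) by (apply Rinv_le_contravar; lra).
    fold s. replace (2 * (e' * (Kp * s)) * (1 + / lo1 r) * s)
      with (eps * s ^ 2 * ((1 + / lo1 r) / C1)) by (unfold e', Kp; field; lra).
    apply (Rle_trans _ (eps * s ^ 2 * 1)); [|lra].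
    apply Rmult_le_compat_l; [nra|]. apply Rle_div_l; [exact HC1|]. unfold C1; lra.
Qed.

Lemma polar_defect_zero Q : polar_rect R0 Q -> polar_defect w g Q = 0.
Proof.
  intros HQ. pose proof Ccontinuous_on_disc_holo as Hgc.
  apply goursat_bisection.
  - unfold polar_rect, subrect in *; lra.
  - intros. apply (polar_defect_split1 w R0); auto. eapply polar_rect_subrect; eauto.
  - intros. apply (polar_defect_split2 w R0); auto. eapply polar_rect_subrect; eauto.
  - apply polar_defect_local, HQ.
Qed.

Lemma circle_integral_re_const r r' : 0 < r' <= r -> r < R0 ->
  RInt (polar_re w g r) 0 (2 * PI) = RInt (polar_re w g r') 0 (2 * PI).
Proof.
  intros Hr' Hr. pose proof PI_RGT_0.
  pose proof Ccontinuous_on_disc_holo as Hgc.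
  pose proof (polar_defect_zero (Rect r' r 0 (2 * PI))) as H0.
  unfold polar_defect in H0; simpl in H0.
  rewrite (RInt_ext (V := R_CompleteNormedModule) (fun s => _ / s) (fun _ => 0)) in H0.
  2:{ intros s _. cbv beta. unfold polar_im, polar. rewrite cos_2PI, sin_2PI, cos_0, sin_0.
      rewrite Rminus_diag. apply Rmult_0_l. }
  rewrite RInt_const, (RInt_minus (V := R_CompleteNormedModule)) in H0
    by (apply (ex_RInt_polar_re w R0); auto; rewrite Rabs_pos_eq; lra).
  unfold minus, plus, opp, scal in H0; simpl in H0; unfold mult in H0; simpl in H0.
  assert (Hrect : polar_rect R0 (Rect r' r 0 (2 * PI))) by (unfold polar_rect; simpl; lra).
  specialize (H0 Hrect). lra.
Qed.

Lemma mean_value_re r : 0 < r < R0 ->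
  RInt (polar_re w g r) 0 (2 * PI) = 2 * PI * fst (g w).
Proof.
  intros Hr. pose proof PI_RGT_0.
  pose proof Ccontinuous_on_disc_holo as Hgc.
  apply Rminus_diag_uniq, Rabs_eq_0, Rle_antisym; [|apply Rabs_pos].
  apply (Rle_of_forall_le_add _ 0 (2 * PI)); [lra|]. intros eps Heps.
  destruct (Hgc w ltac:(replace (w - w)%C with (RtoC 0) by ring; rewrite Cmod_0; lra) eps Heps)
    as (d & Hd & Hcont).
  set (r' := Rmin r (d / 2)).
  assert (Hr' : 0 < r' <= r) by
    (unfold r'; split; [apply Rmin_pos; lra|apply Rmin_l]).
  assert (Hr'd : r' < d) by (unfold r'; eapply Rle_lt_trans; [apply Rmin_r|lra]).
  rewrite (circle_integral_re_const r r') by lra.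
  replace (2 * PI * fst (g w)) with (RInt (fun _ => fst (g w)) 0 (2 * PI))
    by (rewrite RInt_const; unfold scal; simpl; unfold mult; simpl; ring).
  rewrite <- (RInt_minus (V := R_CompleteNormedModule));
    [|apply (ex_RInt_polar_re w R0); auto; rewrite Rabs_pos_eq; lra|apply ex_RInt_const].
  replace (0 + 2 * PI * eps) with ((2 * PI - 0) * eps) by ring.
  apply abs_RInt_le_const; [lra| |].
  - apply (ex_RInt_minus (V := R_CompleteNormedModule));
      [apply (ex_RInt_polar_re w R0); auto; rewrite Rabs_pos_eq; lra|apply ex_RInt_const].
  - intros t _. unfold polar_re, minus, plus, opp; simpl.
    replace (fst (g (polar w r' t)) + - fst (g w)) with (fst (g (polar w r' t) - g w)%C)
      by (simpl; ring).
    eapply Rle_trans; [apply re_le_Cmod|]. apply Rlt_le, Hcont.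
    rewrite Cmod_polar_sub_center, Rabs_pos_eq; lra.
Qed.
End MeanValue.

Lemma RInt_lt_of_lt_at (f : R -> R) a b t0 M : a < t0 < b ->
  (forall t, a <= t <= b -> continuity_pt f t) ->
  (forall t, a <= t <= b -> f t <= M) -> f t0 < M -> RInt f a b < M * (b - a).
Proof.
  intros Ht0 Hc Hle Hlt.
  assert (Hex : forall c d, a <= c -> c <= d -> d <= b -> ex_RInt f c d).
  { intros c d Hac Hcd Hdb. apply (ex_RInt_continuous (V := R_CompleteNormedModule)).
    intros t Ht. rewrite Rmin_left, Rmax_right in Ht by lra.
    apply continuity_pt_filterlim, Hc. lra. }
  destruct (Hc t0 ltac:(lra) (M - f t0) ltac:(lra)) as (d & Hd & Hnear).
  set (d' := Rmin (d / 2) (Rmin ((t0 - a) / 2) ((b - t0) / 2))).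
  assert (Hd' : 0 < d' /\ d' <= d / 2 /\ d' <= (t0 - a) / 2 /\ d' <= (b - t0) / 2).
  { unfold d'. pose proof (Rmin_l (d / 2) (Rmin ((t0 - a) / 2) ((b - t0) / 2))).
    pose proof (Rmin_r (d / 2) (Rmin ((t0 - a) / 2) ((b - t0) / 2))).
    pose proof (Rmin_l ((t0 - a) / 2) ((b - t0) / 2)).
    pose proof (Rmin_r ((t0 - a) / 2) ((b - t0) / 2)).
    repeat split; try lra. repeat apply Rmin_glb_lt; lra. }
  assert (Hconst : forall c e, c <= e -> RInt (fun _ => M) c e = M * (e - c))
    by (intros; rewrite RInt_const; unfold scal; simpl; unfold mult; simpl; ring).
  assert (Hbound : forall c e, a <= c -> c <= e -> e <= b -> RInt f c e <= M * (e - c)).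
  { intros c e Hac Hce Heb. rewrite <- Hconst by lra.
    apply RInt_le; [lra|apply Hex; lra|apply ex_RInt_const|].
    intros; apply Hle; lra. }
  assert (Hmid : RInt f (t0 - d') (t0 + d') < M * ((t0 + d') - (t0 - d'))).
  { rewrite <- Hconst by lra. apply RInt_lt; [lra| |intros; apply continuity_pt_filterlim, Hc; lra|].
    - intros. apply continuous_const.
    - intros t Ht. destruct (Req_dec t t0) as [->|Hne]; [lra|].
      assert (Hdist : R_dist t t0 < d) by (unfold R_dist; apply Rabs_def1; lra).
      specialize (Hnear t (conj (conj I (not_eq_sym Hne)) Hdist)).
      simpl in Hnear; unfold R_dist in Hnear. apply Rabs_def2 in Hnear. lra. }
  rewrite <- (RInt_Chasles (V := R_CompleteNormedModule) f a (t0 - d') b),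
    <- (RInt_Chasles (V := R_CompleteNormedModule) f (t0 - d') (t0 + d') b)
    by (apply Hex; lra).
  unfold plus; simpl.
  pose proof (Hbound a (t0 - d') ltac:(lra) ltac:(lra) ltac:(lra)).
  pose proof (Hbound (t0 + d') b ltac:(lra) ltac:(lra) ltac:(lra)).
  lra.
Qed.

Section MaximumPrinciple.
Variable F : C -> C.
Hypothesis HF : forall z, Cmod z < 1 -> ex_Cderive F z.
Hypothesis HreF : forall z, Cmod z < 1 -> fst (F z) <= 1.

(* The mean of [Re F <= 1] over the circle about [x] is [Re F x = 1], which forces
   [Re F = 1] on the whole circle, in particular at its leftmost point. *)
Lemma re_eq_one_shift_left (x r : R) : 0 <= x -> 0 < r < 1 - x ->
  fst (F (RtoC x)) = 1 -> fst (F (RtoC (x - r))) = 1.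
Proof.
  intros Hx Hr Hfx.
  assert (Hin : forall z, Cmod (z - RtoC x) < 1 - x -> Cmod z < 1).
  { intros z Hz. pose proof (Cmod_le_sub z (RtoC x)).
    rewrite Cmod_R, Rabs_pos_eq in H by lra. lra. }
  assert (HMV := mean_value_re F (RtoC x) (1 - x) (fun z Hz => HF z (Hin z Hz)) r Hr).
  rewrite Hfx in HMV.
  destruct (Req_dec (fst (F (RtoC (x - r)))) 1) as [|Hne]; [assumption|exfalso].
  assert (Hpi : polar (RtoC x) r PI = RtoC (x - r)).
  { unfold polar, RtoC; simpl. rewrite cos_PI, sin_PI. f_equal; ring. }
  pose proof PI_RGT_0.
  assert (Hlt : RInt (polar_re (RtoC x) F r) 0 (2 * PI) < 1 * (2 * PI - 0)).
  { apply RInt_lt_of_lt_at with PI; [lra| | |].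
    - intros t _. apply (continuity_pt_polar_re (RtoC x) (1 - x)).
      + intros z Hz. apply ex_Cderive_Ccontinuous, HF, Hin, Hz.
      + rewrite Rabs_pos_eq; lra.
    - intros t _. apply HreF, Hin. rewrite Cmod_polar_sub_center, Rabs_pos_eq; lra.
    - unfold polar_re. rewrite Hpi.
      assert (Cmod (RtoC (x - r)) < 1) by (rewrite Cmod_R; apply Rabs_def1; lra).
      pose proof (HreF _ H0). lra. }
  lra.
Qed.

Lemma re_eq_one_at_zero (rho : R) : 0 < rho < 1 ->
  fst (F (RtoC rho)) = 1 -> fst (F (RtoC 0)) = 1.
Proof.
  intros Hrho Hone. set (delta := (1 - rho) / 2).
  assert (Hsteps : forall k x, 0 <= x <= rho -> x < INR k * delta ->
                   fst (F (RtoC x)) = 1 -> fst (F (RtoC 0)) = 1).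
  { induction k as [|k IH]; intros x Hx Hxk Hfx; [simpl in Hxk; lra|].
    rewrite S_INR in Hxk.
    destruct (Rlt_le_dec x delta) as [Hsmall|Hlarge].
    - destruct (Req_dec x 0) as [->|Hx0]; [exact Hfx|].
      replace 0 with (x - x) by ring.
      apply re_eq_one_shift_left; unfold delta in *; lra.
    - apply (IH (x - delta)); [unfold delta in *; lra|lra|].
      apply re_eq_one_shift_left; unfold delta in *; lra. }
  destruct (INR_archimed delta rho) as [k Hk]; [unfold delta; lra|].
  apply (Hsteps k rho); lra.
Qed.
End MaximumPrinciple.

Theorem strict_maximum_modulus (f : C -> C) :
  (forall z, Cmod z < 1 -> ex_Cderive f z) ->
  (forall z, Cmod z < 1 -> Cmod (f z) <= 1) ->
  Cmod (f (RtoC 0)) < 1 ->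
  forall z, Cmod z < 1 -> Cmod (f z) < 1.
Proof.
  intros Hd Hb H0 z Hz.
  destruct (Rlt_le_dec (Cmod (f z)) 1) as [|Hge]; [assumption|exfalso].
  assert (Hc1 : Cmod (f z) = 1) by (pose proof (Hb z Hz); lra).
  destruct (Req_dec (Cmod z) 0) as [Hz0|Hz0].
  { apply Cmod_eq_0 in Hz0. subst z. lra. }
  set (rho := Cmod z).
  assert (Hrho : 0 < rho < 1) by (pose proof (Cmod_ge_0 z); unfold rho; lra).
  assert (Hrho0 : RtoC rho <> RtoC 0) by (intro E; injection E; lra).
  set (e := (z / RtoC rho)%C).
  assert (He : Cmod e = 1).
  { unfold e. rewrite Cmod_div, Cmod_R, Rabs_pos_eq by (assumption || lra).
    unfold rho. field. exact Hz0. }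
  set (c := f z).
  (* After this rotation [Re F <= 1] attains 1 at [rho], hence at 0, which [|f 0| < 1] forbids. *)
  set (F := fun u => (Cconj c * f (e * u))%C).
  assert (Hin : forall u, Cmod u < 1 -> Cmod (e * u) < 1) by
    (intros u Hu; rewrite Cmod_mult, He; lra).
  assert (HF : forall u, Cmod u < 1 -> ex_Cderive F u).
  { intros u Hu. apply ex_Cderive_mult; [apply ex_Cderive_const|].
    apply (ex_Cderive_comp f (fun u => e * u)%C); [apply Hd, Hin, Hu|].
    apply ex_Cderive_mult; [apply ex_Cderive_const|apply ex_Cderive_id]. }
  assert (HreF : forall u, Cmod u < 1 -> fst (F u) <= Cmod (f (e * u)%C)).
  { intros u Hu. eapply Rle_trans; [apply Rle_abs|]. eapply Rle_trans; [apply re_le_Cmod|].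
    unfold F. rewrite Cmod_mult, Cmod_conj. unfold c. rewrite Hc1. lra. }
  assert (HFrho : fst (F (RtoC rho)) = 1).
  { unfold F. replace (e * RtoC rho)%C with z by (unfold e; field; exact Hrho0).
    fold c. rewrite Cmult_comm, <- Cmod2_conj. unfold c. rewrite Hc1. simpl. ring. }
  pose proof (re_eq_one_at_zero F HF
    (fun u Hu => Rle_trans _ _ _ (HreF u Hu) (Hb _ (Hin u Hu))) rho Hrho HFrho) as HF0.
  pose proof (HreF (RtoC 0) ltac:(rewrite Cmod_0; lra)) as HF0'.
  replace (e * RtoC 0)%C with (RtoC 0) in HF0' by ring. lra.
Qed.

Lemma binom_pos n j : 0 < binom n j.
Proof.
  unfold binom, Binomial.C. apply Rdiv_lt_0_compat; [apply INR_fact_lt_0|].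
  apply Rmult_lt_0_compat; apply INR_fact_lt_0.
Qed.

Lemma binom_sym n j : (j <= n)%nat -> binom n (n - j) = binom n j.
Proof. intro H. symmetry. apply pascal_step1, H. Qed.

Lemma exists_unimodular_re_eq_Cmod (v : C) : exists om, Cmod om = 1 /\ fst (om * v)%C = Cmod v.
Proof.
  destruct (Req_dec (Cmod v) 0) as [H0|H0].
  - exists (RtoC 1). split; [apply Cmod_1|]. apply Cmod_eq_0 in H0. subst v.
    rewrite Cmod_0. simpl. ring.
  - assert (Hm : RtoC (Cmod v) <> RtoC 0) by (intro E; injection E; lra).
    exists (Cconj v / RtoC (Cmod v))%C. split.
    + rewrite Cmod_div, Cmod_conj, Cmod_R, Rabs_pos_eq by (apply Cmod_ge_0 || exact Hm).
      field. exact H0.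
    + replace (Cconj v / RtoC (Cmod v) * v)%C with (v * Cconj v / RtoC (Cmod v))%C
        by (field; exact Hm).
      rewrite <- Cmod2_conj. simpl. field. exact H0.
Qed.

Lemma Cmod_rot_sq_sub (c : R) (q Y1 Y2 om : C) : Cmod om = 1 ->
  Cmod (RtoC c - Y2 * om)%C ^ 2 - Cmod (RtoC c * q * om - Y1)%C ^ 2 =
  c ^ 2 * (1 - Cmod q ^ 2) + Cmod Y2 ^ 2 - Cmod Y1 ^ 2
  - 2 * c * fst (om * (Y2 - Cconj Y1 * q))%C.
Proof.
  intro Hom. assert (Hom2 : Cmod om ^ 2 = 1) by (rewrite Hom; ring).
  rewrite Cmod2_alt in Hom2. rewrite !Cmod2_alt.
  destruct om as [o1 o2], q as [q1 q2], Y1 as [a1 a2], Y2 as [b1 b2].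
  assert (Hom3 : o1 ^ 2 + o2 ^ 2 = 1) by (simpl in Hom2 |- *; lra).
  simpl. apply Rminus_diag_uniq.
  transitivity ((o1 ^ 2 + o2 ^ 2 - 1) * (b1 ^ 2 + b2 ^ 2 - c ^ 2 * (q1 ^ 2 + q2 ^ 2)));
    [ring|]. rewrite Hom3. ring.
Qed.

Lemma conj_pair_identities (B1 B2 q : C) :
  ((B2 + Cconj B1 * q) - Cconj (B1 + Cconj B2 * q) * q)%C = (B2 * RtoC (1 - Cmod q ^ 2))%C /\
  Cmod (B1 + Cconj B2 * q)%C ^ 2 - Cmod (B2 + Cconj B1 * q)%C ^ 2 =
  (Cmod B1 ^ 2 - Cmod B2 ^ 2) * (1 - Cmod q ^ 2).
Proof.
  rewrite !Cmod2_alt. destruct B1 as [a1 a2], B2 as [b1 b2], q as [q1 q2].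
  unfold RtoC. simpl. split; [apply injective_projections; simpl|]; ring.
Qed.

Lemma Cmod_rot_le_of_pair (c : R) (B1 B2 q om : C) :
  Cmod q < 1 -> Cmod B1 + Cmod B2 < c -> Cmod om = 1 ->
  Cmod (RtoC c * q * om - (B1 + Cconj B2 * q))%C <=
  Cmod (RtoC c - (B2 + Cconj B1 * q) * om)%C.
Proof.
  intros Hq HB Hom.
  pose proof (Cmod_ge_0 B1); pose proof (Cmod_ge_0 B2); pose proof (Cmod_ge_0 q).
  set (D := 1 - Cmod q ^ 2).
  assert (HD : 0 < D) by (unfold D; nra).
  pose proof (Cmod_rot_sq_sub c q (B1 + Cconj B2 * q)%C (B2 + Cconj B1 * q)%C om Hom) as E1.
  destruct (conj_pair_identities B1 B2 q) as [E2 E3]. fold D in E1, E2, E3.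
  rewrite E2 in E1.
  replace (fst (om * (B2 * RtoC D)))%C with (D * fst (om * B2)%C) in E1
    by (destruct om, B2; simpl; ring).
  assert (Hre : fst (om * B2)%C <= Cmod B2).
  { eapply Rle_trans; [apply Rle_abs|]. eapply Rle_trans; [apply re_le_Cmod|].
    rewrite Cmod_mult, Hom. lra. }
  assert (Cmod B1 ^ 2 < (c - Cmod B2) ^ 2) by nra.
  assert (c * fst (om * B2)%C <= c * Cmod B2) by (apply Rmult_le_compat_l; lra).
  assert (0 <= D * (c ^ 2 - (Cmod B1 ^ 2 - Cmod B2 ^ 2) - 2 * c * fst (om * B2)%C))
    by (apply Rmult_le_pos; nra).
  apply Rsqr_incr_0_var; [|apply Cmod_ge_0]. unfold Rsqr. lra.
Qed.

Lemma tG_pair n y q j : tG n y q -> (1 <= j <= n - 1)%nat ->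
  exists B1 B2, y j = (B1 + Cconj B2 * q)%C /\ y (n - j)%nat = (B2 + Cconj B1 * q)%C /\
    Cmod B1 + Cmod B2 < binom n j /\ Cmod q < 1.
Proof.
  intros [Hq [beta Hbeta]] Hj. exists (beta j), (beta (n - j)%nat).
  destruct (Hbeta j Hj) as [E1 L1].
  destruct (Hbeta (n - j)%nat ltac:(lia)) as [E2 _].
  replace (n - (n - j))%nat with j in E2 by lia.
  repeat split; assumption.
Qed.

Lemma tGamma_Cmod_q_le n y q : tGamma n y q -> Cmod q <= 1.
Proof.
  intro H. apply (Rle_of_forall_le_add _ _ 1 Rlt_0_1). intros eps Heps.
  destruct (H eps Heps) as (y' & q' & [Hq' _] & _ & Hqq). unfold inD in Hq'.
  pose proof (Cmod_le_sub q q'). rewrite Cmod_sub_sym in Hqq. lra.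
Qed.

Lemma tGamma_Cmod_y_le n y q k : tGamma n y q -> (1 <= k <= n - 1)%nat ->
  Cmod (y k) <= binom n k.
Proof.
  intros H Hk. apply (Rle_of_forall_le_add _ _ 1 Rlt_0_1). intros eps Heps.
  destruct (H eps Heps) as (y' & q' & HG & Hyy & _).
  destruct (tG_pair n y' q' k HG Hk) as (B1 & B2 & E1 & _ & HB & Hq').
  specialize (Hyy k Hk). rewrite Cmod_sub_sym in Hyy.
  pose proof (Cmod_le_sub (y k) (y' k)).
  assert (Cmod (y' k) <= Cmod B1 + Cmod B2).
  { rewrite E1. eapply Rle_trans; [apply Cmod_triangle|]. rewrite Cmod_mult, Cmod_conj.
    pose proof (Cmod_ge_0 B2). pose proof (Cmod_ge_0 q'). nra. }
  lra.
Qed.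

Lemma tGamma_Cmod_rot_le n y q j om : tGamma n y q -> (1 <= j <= n - 1)%nat -> Cmod om = 1 ->
  Cmod (RtoC (binom n j) * q * om - y j)%C <= Cmod (RtoC (binom n j) - y (n - j)%nat * om)%C.
Proof.
  intros H Hj Hom. set (c := binom n j). pose proof (binom_pos n j) as Hc. fold c in Hc.
  apply (Rle_of_forall_le_add _ _ (c + 2) ltac:(lra)). intros eps Heps.
  destruct (H eps Heps) as (y' & q' & HG & Hyy & Hqq).
  destruct (tG_pair n y' q' j HG Hj) as (B1 & B2 & E1 & E2 & HB & Hq').
  pose proof (Cmod_rot_le_of_pair c B1 B2 q' om Hq' HB Hom) as Hle.
  rewrite <- E1, <- E2 in Hle.
  pose proof (Hyy j Hj) as Hy1. pose proof (Hyy (n - j)%nat ltac:(lia)) as Hy2.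
  pose proof (Cmod_le_sub (RtoC c * q * om - y j)%C (RtoC c * q' * om - y' j)%C) as T1.
  replace ((RtoC c * q * om - y j) - (RtoC c * q' * om - y' j))%C
    with (RtoC c * om * (q - q') + (y' j - y j))%C in T1 by ring.
  assert (T2 : Cmod (RtoC c * om * (q - q') + (y' j - y j))%C <= c * eps + eps).
  { eapply Rle_trans; [apply Cmod_triangle|].
    rewrite !Cmod_mult, Hom, Cmod_R, Rabs_pos_eq by lra.
    rewrite Cmod_sub_sym in Hqq. nra. }
  pose proof (Cmod_le_sub (RtoC c - y' (n - j)%nat * om)%C (RtoC c - y (n - j)%nat * om)%C) as T3.
  replace ((RtoC c - y' (n - j)%nat * om) - (RtoC c - y (n - j)%nat * om))%C
    with ((y (n - j)%nat - y' (n - j)%nat) * om)%C in T3 by ring.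
  rewrite Cmod_mult, Hom, Rmult_1_r, (Cmod_sub_sym (y (n - j)%nat)) in T3.
  lra.
Qed.

Lemma tG_of_Cmod_sum_lt (n : nat) (y : nat -> C) (q : C) : Cmod q < 1 ->
  (forall j, (1 <= j <= n - 1)%nat ->
     Cmod (y j - Cconj (y (n - j)%nat) * q)%C + Cmod (y (n - j)%nat - Cconj (y j) * q)%C
     < binom n j * (1 - Cmod q ^ 2)) ->
  tG n y q.
Proof.
  intros Hq Hsum. pose proof (Cmod_ge_0 q).
  set (D := 1 - Cmod q ^ 2). assert (HD : 0 < D) by (unfold D; nra).
  assert (HD0 : RtoC D <> RtoC 0) by (intro E; injection E; lra).
  split; [exact Hq|].
  (* The witness solves [y_j = b_j + conj(b_(n-j)) q], [y_(n-j) = b_(n-j) + conj(b_j) q]. *)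
  exists (fun k => (y k - Cconj (y (n - k)%nat) * q) / RtoC D)%C.
  intros j Hj. replace (n - (n - j))%nat with j by lia. split.
  - unfold D. rewrite Cmod2_alt.
    destruct (y j) as [a1 a2], (y (n - j)%nat) as [b1 b2], q as [q1 q2].
    unfold D in HD; rewrite Cmod2_alt in HD; simpl in HD |- *.
    unfold Cdiv, Cinv, Cconj, Cmult, Cminus, Cplus, Copp, RtoC; simpl.
    apply injective_projections; simpl; field; nra.
  - rewrite !Cmod_div, Cmod_R, Rabs_pos_eq by (lra || exact HD0).
    specialize (Hsum j Hj). fold D in Hsum.
    apply (Rmult_lt_reg_r D); [exact HD|].
    replace ((_ / D + _ / D) * D) with
      (Cmod (y j - Cconj (y (n - j)%nat) * q)%C + Cmod (y (n - j)%nat - Cconj (y j) * q)%C)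
      by (field; lra).
    exact Hsum.
Qed.

Section GammaToG.
Variables (n : nat) (psiy : C -> nat -> C) (psiq : C -> C).
Hypothesis Hhy : forall j, (1 <= j <= n - 1)%nat -> holo_on_D (fun z => psiy z j).
Hypothesis Hhq : holo_on_D psiq.
Hypothesis HGamma : forall z, inD z -> tGamma n (psiy z) (psiq z).
Hypothesis H0y : forall j, (1 <= j <= n - 1)%nat -> psiy (RtoC 0) j = RtoC 0.
Hypothesis H0q : psiq (RtoC 0) = RtoC 0.

Lemma Cmod_psiq_lt_1 z : inD z -> Cmod (psiq z) < 1.
Proof.
  apply strict_maximum_modulus; [exact Hhq| |rewrite H0q, Cmod_0; lra].
  intros u Hu. apply (tGamma_Cmod_q_le n (psiy u)), HGamma, Hu.
Qed.

Lemma Cmod_psiy_lt_binom k z : (1 <= k <= n - 1)%nat -> inD z -> Cmod (psiy z k) < binom n k.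
Proof.
  intros Hk Hz. set (c := binom n k). pose proof (binom_pos n k) as Hc. fold c in Hc.
  assert (Hmod : forall u, Cmod (psiy u k * RtoC (/ c))%C = Cmod (psiy u k) / c)
    by (intro u; rewrite Cmod_mult, Cmod_R, Rabs_pos_eq by (apply Rlt_le, Rinv_0_lt_compat, Hc);
        reflexivity).
  assert (H : Cmod (psiy z k * RtoC (/ c))%C < 1).
  { apply (strict_maximum_modulus (fun u => psiy u k * RtoC (/ c))%C); [| | |exact Hz].
    - intros u Hu. apply ex_Cderive_mult; [apply Hhy; assumption|apply ex_Cderive_const].
    - intros u Hu. rewrite Hmod. apply Rle_div_l; [exact Hc|].
      rewrite Rmult_1_l. apply (tGamma_Cmod_y_le n (psiy u) (psiq u) k (HGamma u Hu) Hk).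
    - cbv beta. rewrite H0y, Cmult_0_l, Cmod_0 by exact Hk. lra. }
  rewrite Hmod in H. apply Rlt_div_l in H; lra.
Qed.

(* The quotient [(c psiq om - psiy_j) / (c - psiy_(n-j) om)] maps the disc into the closed
   disc and vanishes at 0, so it is strictly inside; with [om] aligned with
   [psiy_(n-j) - conj(psiy_j) psiq], that is exactly this inequality. *)
Lemma psi_pair_ineq j z : (1 <= j <= n - 1)%nat -> inD z ->
  2 * binom n j * Cmod (psiy z (n - j)%nat - Cconj (psiy z j) * psiq z)%C <
  binom n j ^ 2 * (1 - Cmod (psiq z) ^ 2) + Cmod (psiy z (n - j)%nat) ^ 2
  - Cmod (psiy z j) ^ 2.
Proof.
  intros Hj Hz. set (c := binom n j). pose proof (binom_pos n j) as Hc. fold c in Hc.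
  assert (Hj' : (1 <= n - j <= n - 1)%nat) by lia.
  destruct (exists_unimodular_re_eq_Cmod (psiy z (n - j)%nat - Cconj (psiy z j) * psiq z)%C)
    as (om & Hom & Hre).
  set (num := fun u => (RtoC c * psiq u * om - psiy u j)%C).
  set (den := fun u => (RtoC c - psiy u (n - j)%nat * om)%C).
  assert (Hden : forall u, inD u -> 0 < Cmod (den u)).
  { intros u Hu. pose proof (Cmod_psiy_lt_binom (n - j) u Hj' Hu) as Hlt.
    rewrite binom_sym in Hlt by lia. fold c in Hlt.
    pose proof (Cmod_le_sub (RtoC c) (psiy u (n - j)%nat * om)%C) as T.
    rewrite Cmod_mult, Hom, Rmult_1_r, Cmod_R, Rabs_pos_eq in T by lra.
    unfold den. lra. }
  assert (Hden0 : forall u, inD u -> den u <> RtoC 0)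
    by (intros u Hu E; pose proof (Hden u Hu) as H; rewrite E, Cmod_0 in H; lra).
  assert (Hquot : Cmod (num z / den z)%C < 1).
  { apply (strict_maximum_modulus (fun u => num u / den u)%C); [| | |exact Hz].
    - intros u Hu. apply ex_Cderive_div; [| |apply Hden0, Hu].
      + apply ex_Cderive_minus; [|apply Hhy; assumption].
        apply ex_Cderive_mult; [|apply ex_Cderive_const].
        apply ex_Cderive_mult; [apply ex_Cderive_const|apply Hhq, Hu].
      + apply ex_Cderive_minus; [apply ex_Cderive_const|].
        apply ex_Cderive_mult; [apply Hhy; assumption|apply ex_Cderive_const].
    - intros u Hu. rewrite Cmod_div by (apply Hden0, Hu).
      pose proof (Hden u Hu). apply Rle_div_l; [lra|]. rewrite Rmult_1_l.
      apply (tGamma_Cmod_rot_le n (psiy u) (psiq u) j om (HGamma u Hu) Hj Hom).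
    - cbv beta. unfold num. rewrite H0q, (H0y j Hj).
      replace (RtoC c * RtoC 0 * om - RtoC 0)%C with (RtoC 0) by ring.
      unfold Cdiv. rewrite Cmult_0_l, Cmod_0. lra. }
  rewrite Cmod_div in Hquot by (apply Hden0, Hz).
  pose proof (Hden z Hz). apply Rlt_div_l in Hquot; [|lra]. rewrite Rmult_1_l in Hquot.
  assert (Hsq : Cmod (num z) ^ 2 < Cmod (den z) ^ 2) by (pose proof (Cmod_ge_0 (num z)); nra).
  pose proof (Cmod_rot_sq_sub c (psiq z) (psiy z j) (psiy z (n - j)%nat) om Hom) as E.
  rewrite Hre in E. unfold num, den in Hsq. lra.
Qed.

Lemma psi_in_tG z : inD z -> tG n (psiy z) (psiq z).
Proof.
  intros Hz. apply tG_of_Cmod_sum_lt; [apply Cmod_psiq_lt_1, Hz|].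
  intros j Hj. pose proof (binom_pos n j) as Hc.
  pose proof (psi_pair_ineq j z Hj Hz) as K1.
  pose proof (psi_pair_ineq (n - j)%nat z ltac:(lia) Hz) as K2.
  replace (n - (n - j))%nat with j in K2 by lia. rewrite binom_sym in K2 by lia.
  apply (Rmult_lt_reg_l (2 * binom n j)); lra.
Qed.
End GammaToG.

Lemma tG_sub_tGamma n y q : tG n y q -> tGamma n y q.
Proof.
  intros H eps Heps. exists y, q. split; [exact H|]. split.
  - intros j _. replace (y j - y j)%C with (RtoC 0) by ring. rewrite Cmod_0. exact Heps.
  - replace (q - q)%C with (RtoC 0) by ring. rewrite Cmod_0. exact Heps.
Qed.

Theorem mainTheorem12 (n : nat) (lam0 : C) (y0 : nat -> C) (q0 : C) :
  (2 <= n)%nat ->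
  inD lam0 -> lam0 <> RtoC 0 ->
  tG n y0 q0 ->
  ((exists (psiy : C -> nat -> C) (psiq : C -> C),
       analytic_interp (tGamma n) n psiy psiq lam0 y0 q0)
   <->
   (exists (psiy : C -> nat -> C) (psiq : C -> C),
       analytic_interp (tG n) n psiy psiq lam0 y0 q0)).
Proof.
  intros _ _ _ _.
  split; intros (psiy & psiq & Hy & Hq & HS & Hinterp);
    exists psiy, psiq; refine (conj Hy (conj Hq (conj _ Hinterp))); intros z Hz.
  - destruct Hinterp as (H0y & H0q & _). apply psi_in_tG; assumption.
  - apply tG_sub_tGamma, HS, Hz.
Qed.
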